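(* For every $d\ge2$ there exist constants $a_d,A_d>0$ and an integer $T'_d\ge1$, depending only on $d$, such that for every $\delta>0$ and every $T\ge T'_d$, \[ \delta\bigl(1+a_d\,T^{-2/(d-1)}\bigr)\;\le\;\mathrm{OPT}^{\mathrm{improper}}_d(T,\delta)\;\le\;\delta\bigl(1+A_d\,T^{-2/(d-1)}\bigr). \]
   Context: Improper linear reconstruction game: fix $d\ge1$, $T\ge0$, $\delta>0$. An adversary holds a secret $x^*\in\mathbb{R}^d$; in each round $t=1,\dots,T$ the reconstructor (possibly adaptively) chooses $v_t\in S^{d-1}$ and receives $r_t\in\mathbb{R}$ with $|r_t-\langle x^*,v_t\rangle|\le\delta$. After $T$ rounds the reconstructor outputs a function $\hat G_T:S^{d-1}\to\mathbb{R}$. All strategies are deterministic. $\mathrm{OPT}^{\mathrm{improper}}_d(T,\delta)=\inf_{\mathcal R}\sup_{x^*}\sup_{\mathcal A}\sup_{v\in S^{d-1}}|\hat G_T(v)-\langle x^*,v\rangle|$, the infimum over improper reconstructor strategies and the suprema over secrets and adversary answer strategies consistent with the secret. *)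

From HB Require Import structures.
From mathcomp Require Import all_boot all_order all_algebra.
From mathcomp Require Import all_classical all_reals.
From mathcomp Require Import ereal exp.
Set Implicit Arguments. Unset Strict Implicit. Unset Printing Implicit Defensive.
Import Order.TTheory GRing.Theory Num.Theory.
Local Open Scope ring_scope.
Local Open Scope classical_set_scope.

Section Game.
Variables (R : realType) (d : nat).

Definition dotv (u v : 'rV[R]_d) : R := \sum_(i < d) u 0 i * v 0 i.

Definition sphere := {v : 'rV[R]_d | dotv v v = 1}.

(* A deterministic, adaptive, improper reconstructor strategy.
   [rq s] is the query asked after having received the answers [s]
   (earlier queries are determined by earlier answers, since the strategy is
   deterministic); [rout s] is the output function G_T after the answers [s]. *)
Record reconstructor := Reconstructor {
  rq : seq R -> sphere;
  rout : seq R -> sphere -> R }.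

(* The answer sequence [rs] (of length T) is consistent with the secret [x]
   against strategy [S]: in round t+1 the query is v = rq S (take t rs) and
   the answer r satisfies |r - <x, v>| <= delta. Every adaptive deterministic
   adversary strategy produces such a sequence, and every such sequence is
   produced by some adversary strategy. *)
Definition consistent (S : reconstructor) (T : nat) (delta : R)
    (x : 'rV[R]_d) (rs : seq R) : Prop :=
  size rs = T /\
  forall t, (t < T)%N ->
    `| nth 0 rs t - dotv x (proj1_sig (rq S (take t rs))) | <= delta.

Definition worst_error (S : reconstructor) (T : nat) (delta : R) : \bar R :=
  ereal_sup [set e : \bar R | exists (x : 'rV[R]_d) (rs : seq R) (v : sphere),
      consistent S T delta x rs /\
      e = (`| rout S rs v - dotv x (proj1_sig v) |)%:E].

Definition OPT_improper (T : nat) (delta : R) : \bar R :=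
  ereal_inf [set worst_error S T delta | S in [set: reconstructor]].

End Game.

From HB Require Import structures.
From mathcomp Require Import all_boot all_order all_algebra.
From mathcomp Require Import all_classical all_reals.
From mathcomp Require Import ereal exp.
From mathcomp Require Import ring lra zify.
Import Order.TTheory GRing.Theory Num.Theory.
Local Open Scope ring_scope.
Set Implicit Arguments. Unset Strict Implicit. Unset Printing Implicit Defensive.

(* Write n = d - 1 and sigma = 1 / (32 (n + 1) m^2).
   Lower bound: the m^n unit vectors u_f pointing to (m, f_1, ..., f_n), for
   f : [n] -> [m], satisfy <u_f, u_g>^2 <= 1 - 8 sigma when f <> g, so a unit query v
   has |<u_f, v>| > 1 / (1 + sigma) for at most one f.  Against the adversary that
   always answers 0, fewer than m^n queries leave some u_f undetected; then both
   secrets +-delta (1 + sigma) u_f are consistent with all answers, and the error in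
   direction u_f is at least delta (1 + sigma).
   Upper bound: query the normalised integer points of the faces of the cube
   [-m, m]^(n+1) and output the midpoint of the range of <x, v> over the consistent
   secrets x.  Two consistent secrets differ by 2 delta y with |<y, w>| <= |w| for all
   these points w; rounding a rescaled y to a nearby face point gives
   |y|^2 <= 1 + (n + 1) / m^2, so the error is at most delta (1 + (n + 1) / (2 m^2)).
   Taking m of order T^(1/n) in both constructions gives the rates. *)

Section Dotv.
Variables (R : realType) (d : nat).
Implicit Types (u v w z e : 'rV[R]_d) (t lam s : R).

Lemma dotvC u v : dotv u v = dotv v u.
Proof. by apply: eq_bigr => i _; rewrite mulrC. Qed.

Lemma dotvDl u w v : dotv (u + w) v = dotv u v + dotv w v.
Proof. by rewrite /dotv -big_split; apply: eq_bigr => i _; rewrite !mxE mulrDl. Qed.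

Lemma dotvZl t u v : dotv (t *: u) v = t * dotv u v.
Proof. by rewrite /dotv mulr_sumr; apply: eq_bigr => i _; rewrite !mxE mulrA. Qed.

Lemma dotvNl u v : dotv (- u) v = - dotv u v.
Proof. by rewrite -scaleN1r dotvZl mulN1r. Qed.

Lemma dotvBl u w v : dotv (u - w) v = dotv u v - dotv w v.
Proof. by rewrite dotvDl dotvNl. Qed.

Lemma dotvDr u w v : dotv v (u + w) = dotv v u + dotv v w.
Proof. by rewrite dotvC dotvDl !(dotvC v). Qed.

Lemma dotvZr t u v : dotv v (t *: u) = t * dotv v u.
Proof. by rewrite dotvC dotvZl (dotvC v). Qed.

Lemma dotvBr u w v : dotv v (u - w) = dotv v u - dotv v w.
Proof. by rewrite dotvC dotvBl !(dotvC v). Qed.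

Lemma dotv_ge0 u : 0 <= dotv u u.
Proof. by apply: sumr_ge0 => i _; rewrite -expr2 sqr_ge0. Qed.

Lemma dotv_subZ u v t :
  dotv (u - t *: v) (u - t *: v) = dotv u u - 2 * t * dotv u v + t ^+ 2 * dotv v v.
Proof. by rewrite dotvBl !dotvBr !dotvZl !dotvZr (dotvC v u); ring. Qed.

Lemma dotv_mean_le u v t : 2 * t * dotv u v <= dotv u u + t ^+ 2 * dotv v v.
Proof. by have := dotv_ge0 (u - t *: v); rewrite dotv_subZ; lra. Qed.

Lemma dotv_unit_sqr_le u v : dotv v v = 1 -> dotv u v ^+ 2 <= dotv u u.
Proof. by move=> v1; have := dotv_mean_le u v (dotv u v); rewrite v1; nra. Qed.

Lemma dotv_unit_le_mean u v : dotv v v = 1 -> dotv u v <= (1 + dotv u u) / 2.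
Proof. by move=> v1; have := dotv_mean_le u v 1; rewrite v1; lra. Qed.

Lemma sqr_dotv_le_line_dist u v r : 0 < dotv v v ->
  (forall t, r <= dotv (u - t *: v) (u - t *: v)) ->
  dotv u v ^+ 2 <= (dotv u u - r) * dotv v v.
Proof.
move=> v_gt0 /(_ (dotv u v / dotv v v)); rewrite dotv_subZ.
set a := dotv u u; set b := dotv v v; set c := dotv u v.
have -> : a - 2 * (c / b) * c + (c / b) ^+ 2 * b = a - c ^+ 2 / b.
  by field; rewrite gt_eqF.
by move=> h; rewrite -ler_pdivrMr //; lra.
Qed.

Lemma coord_sqr_le_dotv u k : u 0 k ^+ 2 <= dotv u u.
Proof.
rewrite /dotv (bigD1 k) //= -expr2 lerDl.
by apply: sumr_ge0 => i _; rewrite -expr2 sqr_ge0.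
Qed.

Lemma coord2_sqr_le_dotv u i j : i != j -> u 0 i ^+ 2 + u 0 j ^+ 2 <= dotv u u.
Proof.
move=> ij; rewrite /dotv (bigD1 i) // (bigD1 j) 1?eq_sym //= -!expr2 addrA lerDl.
by apply: sumr_ge0 => k _; rewrite -expr2 sqr_ge0.
Qed.

Lemma dotv_gt0_coord u k : u 0 k != 0 -> 0 < dotv u u.
Proof.
by move=> uk; apply: lt_le_trans (coord_sqr_le_dotv u k); rewrite exprn_even_gt0.
Qed.

Lemma dotv_le_coord_bound u b : (forall k, `|u 0 k| <= b) -> dotv u u <= d%:R * b ^+ 2.
Proof.
move=> ub; rewrite mulr_natl -[X in _ *+ X]card_ord -sumr_const.
apply: ler_sum => k _; rewrite -expr2 -real_normK ?num_real //.
by rewrite lerXn2r ?nnegrE // (le_trans _ (ub k)).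
Qed.

Definition normalize w := (Num.sqrt (dotv w w))^-1 *: w.

Lemma dotv_normalize w : 0 < dotv w w -> dotv (normalize w) (normalize w) = 1.
Proof.
move=> w_gt0; rewrite /normalize dotvZl dotvZr -{3}(sqr_sqrtr (ltW w_gt0)).
by field; rewrite gt_eqF ?sqrtr_gt0.
Qed.

Lemma dotv_normalize_sqr w z : 0 < dotv w w ->
  dotv z (normalize w) ^+ 2 = dotv z w ^+ 2 / dotv w w.
Proof.
move=> w_gt0; rewrite /normalize dotvZr -{2}(sqr_sqrtr (ltW w_gt0)).
by field; rewrite gt_eqF ?sqrtr_gt0.
Qed.

Definition to_sphere w (w_gt0 : 0 < dotv w w) : sphere R d :=
  exist _ (normalize w) (dotv_normalize w_gt0).

Lemma dotv_perturb_bound z e lam :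
  dotv z (lam *: z + e) ^+ 2 <= dotv (lam *: z + e) (lam *: z + e) ->
  8 * dotv e e <= lam ^+ 2 * dotv z z ->
  (dotv z z - 1) * (lam ^+ 2 * dotv z z) <= 4 * dotv e e.
Proof.
rewrite !dotvDl !dotvDr !dotvZl !dotvZr (dotvC e z).
set r := dotv z z; set p := dotv z e; set q := dotv e e => polar small_e.
have q_ge0 : 0 <= q := dotv_ge0 e.
have r_ge0 : 0 <= r := dotv_ge0 z.
have quarter_ge0 : 0 <= lam ^+ 2 * r / 4 + lam * p + q.
  have := dotv_ge0 (lam / 2 *: z + e).
  by rewrite !dotvDl !dotvDr !dotvZl !dotvZr (dotvC e z) -/r -/p -/q; lra.
(* With A := lam^2 r + 2 lam p, the polar inequality reads r A + p^2 <= A + q. *)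
have key : (r - 1) * (lam ^+ 2 * r + 2 * lam * p) <= q.
  by move: polar; have := sqr_ge0 p; nra.
have L_ge0 : 0 <= lam ^+ 2 * r by rewrite mulr_ge0 ?sqr_ge0.
case: (lerP r 1) => [r_le1|r_gt1]; first by nra.
have A_ge : lam ^+ 2 * r / 4 <= lam ^+ 2 * r + 2 * lam * p by lra.
have : (r - 1) * (lam ^+ 2 * r / 4) <= (r - 1) * (lam ^+ 2 * r + 2 * lam * p).
  by rewrite ler_wpM2l // subr_ge0 ltW.
lra.
Qed.

Lemma aligned_units_dotv_sqr_gt u1 u2 v s :
  dotv u1 u1 = 1 -> dotv u2 u2 = 1 -> dotv v v = 1 -> 0 < s <= 1 / 4 ->
  1 < dotv u1 v ^+ 2 * (1 + s) ^+ 2 -> 1 < dotv u2 v ^+ 2 * (1 + s) ^+ 2 ->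
  1 - 8 * s < dotv u1 u2 ^+ 2.
Proof.
move=> u1_1 u2_1 v1 /andP[s_gt0 s_le] al1 al2.
set a := dotv u1 v in al1; set b := dotv u2 v in al2; set g := dotv u1 u2.
pose K := (1 + s) ^+ 2; rewrite -/K in al1 al2.
have K_ge1 : 1 <= K by rewrite /K; nra.
have [e [e2 eab]] : exists e : R, e ^+ 2 = 1 /\ 0 <= e * (a * b).
  case: (lerP 0 (a * b)) => ab; first by exists 1; rewrite expr1n mul1r.
  by exists (-1); rewrite sqrrN expr1n mulN1r oppr_ge0 ltW.
have sum_le : (a + e * b) ^+ 2 <= 2 + 2 * (e * g).
  have := dotv_unit_sqr_le (u1 + e *: u2) v1.
  rewrite !dotvDl !dotvDr !dotvZl !dotvZr u1_1 u2_1 (dotvC u2 u1) -/a -/b -/g.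
  by move=> h; apply: le_trans h _; nra.
have abK : 1 < e * (a * b) * K.
  have prod : 1 < (a ^+ 2 * K) * (b ^+ 2 * K).
    have : 0 < (a ^+ 2 * K - 1) * (b ^+ 2 * K - 1) by rewrite mulr_gt0 ?subr_gt0.
    by nra.
  have sqr_eq : (a ^+ 2 * K) * (b ^+ 2 * K) = (e * (a * b) * K) ^+ 2.
    by rewrite /K !exprMn e2; ring.
  have : 0 <= e * (a * b) * K by rewrite mulr_ge0 //; lra.
  by rewrite sqr_eq in prod; nra.
have sum_gt : 4 < (a + e * b) ^+ 2 * K.
  have -> : (a + e * b) ^+ 2 = a ^+ 2 + e ^+ 2 * b ^+ 2 + 2 * (e * (a * b)) by ring.
  by rewrite e2; nra.
have eg_gt : 1 - 4 * s < e * g.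
  rewrite ltNge; apply/negP => eg_le.
  have : (a + e * b) ^+ 2 * K <= (4 - 8 * s) * K.
    by apply: ler_wpM2r; lra.
  have : (4 - 8 * s) * K <= 4 by rewrite /K; nra.
  lra.
have : (1 - 4 * s) ^+ 2 < (e * g) ^+ 2 by rewrite ltr_pXn2r ?nnegrE //; lra.
by rewrite exprMn e2 mul1r; nra.
Qed.

End Dotv.

Section RealFacts.
Variable R : realType.

Lemma exists_ord_near (N : nat) (y : R) : 0 <= y <= N%:R ->
  exists k : 'I_N.+1, `|k%:R - y| <= 1 / 2.
Proof.
move=> /andP[y_ge0 y_leN].
have yh_ge0 : 0 <= y + 1 / 2 by lra.
have k_le : (Num.truncn (y + 1 / 2))%:R <= y + 1 / 2 by rewrite truncn_le.
have k_gt : y + 1 / 2 < (Num.truncn (y + 1 / 2))%:R + 1.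
  by rewrite natr1 truncnS_gt.
have k_ltN : (Num.truncn (y + 1 / 2) < N.+1)%N.
  by rewrite truncn_lt_nat // -[N.+1%:R]natr1; lra.
by exists (Ordinal k_ltN); rewrite /= ler_norml; lra.
Qed.

Lemma midpoint_sup_inf_near (A : set R) a D : A a ->
  (forall x y, A x -> A y -> x - y <= D) ->
  `|(sup A + inf A) / 2 - a| <= D / 2.
Proof.
move=> Aa diam.
have A_ne : (A !=set0)%classic by exists a.
have sup_le y : A y -> sup A <= y + D.
  by move=> Ay; apply: ge_sup => // x Ax; have := diam x y Ax Ay; lra.
have a_le_sup : a <= sup A.
  by apply: ub_le_sup => //; exists (a + D) => x Ax; have := diam x a Ax Aa; lra.
have inf_le_a : inf A <= a.
  by apply: ge_inf => //; exists (a - D) => x Ax; have := diam a x Aa Ax; lra.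
have sup_le_inf : sup A - D <= inf A.
  by apply: lb_le_inf => // y Ay; have := sup_le y Ay; lra.
by rewrite ler_norml; have := sup_le a Aa; lra.
Qed.

End RealFacts.

Lemma exists_unhit (I : finType) (T : nat) (P : 'I_T -> pred I) :
  (forall t i j, P t i -> P t j -> i = j) -> (T < #|I|)%N ->
  exists i, forall t, ~~ P t i.
Proof.
move=> hit_uniq T_lt.
case: (pickP (fun i => [forall t, ~~ P t i])) => [i /forallP | all_hit]; first by exists i.
have /fin_all_exists[h hP] : forall i, exists t, P t i.
  move=> i; have /negbT := all_hit i.
  by rewrite negb_forall => /existsP[t]; rewrite negbK; exists t.
have h_inj : injective h by move=> i j hij; apply: (hit_uniq (h i)); rewrite // hij.
by have := leq_card _ h_inj; rewrite card_ord leqNgt T_lt.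
Qed.

Lemma exists_expn_bracket (n c k T : nat) : (0 < n)%N -> (0 < c)%N ->
  ((c * k) ^ n <= T)%N -> exists m, (k <= m)%N /\ ((c * m) ^ n <= T < (c * m.+1) ^ n)%N.
Proof.
move=> n_gt0 c_gt0 ck_le.
have m_le_T m : ((c * m) ^ n <= T)%N -> (m <= T)%N.
  case: m => // m; apply: leq_trans; apply: (@leq_trans (c * m.+1)); first exact: leq_pmull.
  by rewrite -{1}(expn1 (c * m.+1)) leq_pexp2l // muln_gt0 c_gt0.
case: (ex_maxnP (ex_intro _ k ck_le) m_le_T) => m cm_le m_max.
exists m; split; first exact: m_max.
by rewrite cm_le ltnNge; apply/negP => /m_max; rewrite ltnn.
Qed.

Section PowR.
Variables (R : realType) (n : nat).
Hypothesis n_gt0 : (0 < n)%N.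

Lemma powR_expn_2div (x : R) : 0 <= x -> powR (x ^+ n) (2 / n%:R) = x ^+ 2.
Proof.
move=> x_ge0; rewrite -powR_mulrn // -powRrM.
by rewrite (_ : n%:R * _ = 2%:R) ?powR_mulrn //; field; rewrite pnatr_eq0 -lt0n.
Qed.

Lemma sqr_le_powR_2div (x y : R) : 0 <= x -> x ^+ n <= y -> x ^+ 2 <= powR y (2 / n%:R).
Proof.
move=> x_ge0 xn_le; rewrite -powR_expn_2div //.
have xn_ge0 : 0 <= x ^+ n by rewrite exprn_ge0.
by apply: ge0_ler_powR; rewrite ?nnegrE ?divr_ge0 // (le_trans xn_ge0).
Qed.

Lemma powR_2div_le_sqr (x y : R) : 0 <= x -> 0 <= y -> y <= x ^+ n -> powR y (2 / n%:R) <= x ^+ 2.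
Proof.
move=> x_ge0 y_ge0 y_le; rewrite -powR_expn_2div //.
by apply: ge0_ler_powR; rewrite ?nnegrE ?exprn_ge0 ?divr_ge0.
Qed.

End PowR.

Lemma norm_le_distN_or_distD (R : realDomainType) (g a : R) : `|a| <= `|g - a| \/ `|a| <= `|g + a|.
Proof.
have norm_le_sqr (x y : R) : x ^+ 2 <= y ^+ 2 -> `|x| <= `|y|.
  by rewrite -(real_normK (num_real x)) -(real_normK (num_real y)) ler_pXn2r ?nnegrE.
case: (lerP 0 (g * a)) => ga; [right | left]; apply: norm_le_sqr; nra.
Qed.

Lemma worst_error_ge_opposite (R : realType) (d : nat) (S : reconstructor R d) T delta
    (x : 'rV[R]_d) rs (v : sphere R d) :
  consistent S T delta x rs -> consistent S T delta (- x) rs ->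
  ((`|dotv x (proj1_sig v)|)%:E <= worst_error S T delta)%E.
Proof.
move=> cons_x cons_Nx.
have err_le y : consistent S T delta y rs ->
    ((`|rout S rs v - dotv y (proj1_sig v)|)%:E <= worst_error S T delta)%E.
  by move=> cons_y; apply: ereal_sup_ubound; exists y, rs, v.
case: (norm_le_distN_or_distD (rout S rs v) (dotv x (proj1_sig v))) => [|] a_le.
  by apply: le_trans (err_le x cons_x); rewrite lee_fin.
by apply: le_trans (err_le _ cons_Nx); rewrite lee_fin dotvNl opprK.
Qed.

Lemma quarter_le_two_coord_dist (R : realFieldType) (a b t M : R) :
  0 <= b <= M -> 1 <= `|a - b| -> 1 / 4 <= (M - t * M) ^+ 2 + (a - t * b) ^+ 2.
Proof.
move=> /andP[b_ge0 b_leM] ab_ge1.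
have quarter_le_sqr (x : R) : 1 / 2 <= `|x| -> 1 / 4 <= x ^+ 2.
  by move=> x_ge; rewrite -real_normK ?num_real //; nra.
have -> : a - t * b = (a - b) + (1 - t) * b by ring.
have -> : M - t * M = (1 - t) * M by ring.
set s := 1 - t.
case: (lerP (1 / 2) `|s * b|) => [sb_ge|sb_lt].
  have : (s * b) ^+ 2 <= (s * M) ^+ 2.
    by rewrite !exprMn ler_wpM2l ?sqr_ge0 // lerXn2r ?nnegrE // (le_trans b_ge0).
  by have := quarter_le_sqr _ sb_ge; have := sqr_ge0 (a - b + s * b); lra.
have : 1 / 2 <= `|a - b + s * b|.
  by have := lerB_normD (a - b) (s * b); lra.
by move/quarter_le_sqr; have := sqr_ge0 (s * M); lra.
Qed.

Lemma one_le_dist_nat (R : realDomainType) (a b : nat) : a != b -> 1 <= `|a%:R - b%:R : R|.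
Proof.
move=> ab; wlog lt_ab : a b {ab} / (a < b)%N => [hwlog|].
  by move: ab; rewrite neq_ltn => /orP[/hwlog//|/hwlog]; rewrite distrC.
rewrite distrC ger0_norm; last by rewrite subr_ge0 ler_nat ltnW.
by rewrite lerBrDl natr1 ler_nat.
Qed.

Section Packing.
Variables (R : realType) (n m : nat).
Hypothesis m_gt0 : (0 < m)%N.

Definition pack_point (f : {ffun 'I_n -> 'I_m}) : 'rV[R]_n.+1 :=
  \row_k (if unlift ord0 k is Some k' then (f k' : nat)%:R else m%:R).

Lemma pack_point0 f : pack_point f 0 ord0 = m%:R.
Proof. by rewrite mxE unlift_none. Qed.

Lemma dotv_pack_point_gt0 f : 0 < dotv (pack_point f) (pack_point f).
Proof. by apply: (@dotv_gt0_coord _ _ _ ord0); rewrite pack_point0 pnatr_eq0 -lt0n. Qed.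

Lemma dotv_pack_point_le f : dotv (pack_point f) (pack_point f) <= n.+1%:R * m%:R ^+ 2.
Proof.
apply: dotv_le_coord_bound => k; rewrite mxE.
by case: (unlift ord0 k) => [k'|]; rewrite ger0_norm // ler_nat ltnW.
Qed.

Lemma pack_point_line_dist f1 f2 : f1 != f2 -> forall t,
  1 / 4 <= dotv (pack_point f1 - t *: pack_point f2) (pack_point f1 - t *: pack_point f2).
Proof.
move=> f12 t; have [k /= f12k] : exists k, (f1 k : nat) != f2 k.
  case: (pickP (fun k => f1 k != f2 k)) => [k|same]; first by exists k.
  by case/eqP: f12; apply/ffunP => k; apply/eqP; have /negbFE := same k.
apply: le_trans (coord2_sqr_le_dotv _ (neq_lift ord0 k)).
rewrite !mxE unlift_none liftK.
apply: quarter_le_two_coord_dist; first by rewrite ler0n ler_nat /= ltnW.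
exact: one_le_dist_nat.
Qed.

Lemma pack_point_gap f1 f2 : f1 != f2 ->
  dotv (pack_point f1) (pack_point f2) ^+ 2 <=
  dotv (pack_point f1) (pack_point f1) * dotv (pack_point f2) (pack_point f2) *
    (1 - 1 / (4 * n.+1%:R * m%:R ^+ 2)).
Proof.
move=> f12; have B_gt0 := dotv_pack_point_gt0 f2; have A_le := dotv_pack_point_le f1.
have N_gt0 : 0 < n.+1%:R * m%:R ^+ 2 :> R by rewrite mulr_gt0 ?exprn_gt0 ?ltr0n.
apply: le_trans (sqr_dotv_le_line_dist B_gt0 (pack_point_line_dist f12)) _.
move: A_le N_gt0 B_gt0; rewrite -[4 * _ * _]mulrA.
move: (dotv (pack_point f1) _) (dotv (pack_point f2) _) (n.+1%:R * _) => A B N A_le N_gt0 B_gt0.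
rewrite mulrAC; apply: ler_wpM2r; first exact: ltW.
have : A / (4 * N) <= 1 / 4 by rewrite ler_pdivrMr ?mulr_gt0 //; lra.
by rewrite mulrBr mulr1 mulrA mulr1; lra.
Qed.

Definition pack_margin : R := 1 / (32 * n.+1%:R * m%:R ^+ 2).

Lemma pack_margin_gt0 : 0 < pack_margin.
Proof. by rewrite divr_gt0 // !mulr_gt0 ?exprn_gt0 ?ltr0n. Qed.

Lemma pack_margin_le : pack_margin <= 1 / 4.
Proof.
have N_ge1 : 1 <= n.+1%:R * m%:R ^+ 2 :> R.
  by rewrite mulr_ege1 ?ler1n ?expr_ge1 ?ler1n.
have N_gt0 := lt_le_trans ltr01 N_ge1.
by rewrite /pack_margin -mulrA ler_pdivrMr ?(mulr_gt0 _ N_gt0) //; lra.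
Qed.

Definition pack_dir f := normalize (pack_point f).

Lemma pack_dir_unit f : dotv (pack_dir f) (pack_dir f) = 1.
Proof. exact: dotv_normalize (dotv_pack_point_gt0 f). Qed.

Lemma pack_dir_gap f1 f2 : f1 != f2 ->
  dotv (pack_dir f1) (pack_dir f2) ^+ 2 <= 1 - 8 * pack_margin.
Proof.
move=> f12; have A_gt0 := dotv_pack_point_gt0 f1; have B_gt0 := dotv_pack_point_gt0 f2.
rewrite /pack_dir dotv_normalize_sqr // dotvC dotv_normalize_sqr // dotvC.
rewrite ler_pdivrMr // ler_pdivrMr // (mulrC _ (dotv _ (pack_point f1))).
rewrite (_ : 1 - 8 * _ = 1 - 1 / (4 * n.+1%:R * m%:R ^+ 2)); last first.
  by rewrite /pack_margin; field; rewrite nat1r !pnatr_eq0 -lt0n m_gt0.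
by rewrite mulrA mulrAC; apply: pack_point_gap.
Qed.

(* The answer 0 to the query v rules out the secret delta (1 + pack_margin) pack_dir f. *)
Definition detects (v : 'rV[R]_n.+1) f := 1 < dotv (pack_dir f) v ^+ 2 * (1 + pack_margin) ^+ 2.

Lemma detects_uniq v f1 f2 : dotv v v = 1 -> detects v f1 -> detects v f2 -> f1 = f2.
Proof.
move=> v1 det1 det2; case: (eqVneq f1 f2) => // /pack_dir_gap; rewrite leNgt => /negP[].
apply: aligned_units_dotv_sqr_gt det1 det2; rewrite ?pack_dir_unit //.
by rewrite pack_margin_gt0 pack_margin_le.
Qed.

Lemma worst_error_ge_pack (S : reconstructor R n.+1) T delta : 0 < delta -> (T < m ^ n)%N ->
  ((delta * (1 + pack_margin))%:E <= worst_error S T delta)%E.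
Proof.
move=> delta_gt0 T_lt.
pose q t := proj1_sig (rq S (take t (nseq T 0))).
have q_unit t : dotv (q t) (q t) = 1 by rewrite /q; case: (rq S _).
have [f undetected] : exists f, forall t : 'I_T, ~~ detects (q t) f.
  apply: exists_unhit; last by rewrite card_ffun !card_ord.
  by move=> t f1 f2; apply: detects_uniq.
have margin_gt0 := pack_margin_gt0.
set c := delta * (1 + pack_margin).
have c_gt0 : 0 < c by rewrite mulr_gt0 //; lra.
have zero_answers y : (forall t, (t < T)%N -> `|dotv y (q t)| <= delta) ->
    consistent S T delta y (nseq T 0).
  by move=> y_small; split => [|t t_lt]; rewrite ?size_nseq // nth_nseq t_lt sub0r normrN y_small.
have secret_small t : (t < T)%N -> `|dotv (c *: pack_dir f) (q t)| <= delta.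
  move=> t_lt; have := undetected (Ordinal t_lt); rewrite /detects -leNgt -exprMn.
  rewrite -real_normK ?num_real // expr_le1 // normrM (@ger0_norm _ (1 + _)); last by lra.
  move=> aligned_le1; rewrite dotvZl normrM (gtr0_norm c_gt0) /c -mulrA.
  by apply: ler_piMr; [exact: ltW | rewrite mulrC].
have := @worst_error_ge_opposite _ _ S T delta (c *: pack_dir f) (nseq T 0)
  (to_sphere (dotv_pack_point_gt0 f)).
rewrite /= -/(pack_dir f) dotvZl pack_dir_unit mulr1 gtr0_norm //; apply.
  exact: zero_answers.
by apply: zero_answers => t /secret_small; rewrite dotvNl normrN.
Qed.

End Packing.

Section CubeNet.
Variables (R : realType) (n m : nat).
Hypothesis m_gt0 : (0 < m)%N.

Local Notation face_idx := ('I_n.+1 * {ffun 'I_n -> 'I_(2 * m).+1})%type.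

(* The integer points of the face [x_i = m] of the cube [-m, m]^(n+1), i = j.1;
   the other coordinates are j.2 shifted from [0, 2m] to [-m, m]. *)
Definition face_point (j : face_idx) : 'rV[R]_n.+1 :=
  \row_k (if unlift j.1 k is Some k' then (j.2 k' : nat)%:R - m%:R else m%:R).

Lemma dotv_face_point_gt0 j : 0 < dotv (face_point j) (face_point j).
Proof.
by apply: (@dotv_gt0_coord _ _ _ j.1); rewrite mxE unlift_none pnatr_eq0 -lt0n.
Qed.

Lemma face_point_near (y : 'rV[R]_n.+1) i : y 0 i = m%:R -> (forall k, `|y 0 k| <= m%:R) ->
  exists j, forall k, `|face_point j 0 k - y 0 k| <= 1 / 2.
Proof.
move=> yi y_le.
have near k' : exists g : 'I_(2 * m).+1, `|(g : nat)%:R - (y 0 (lift i k') + m%:R)| <= 1 / 2.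
  apply: exists_ord_near; have := y_le (lift i k'); rewrite ler_norml natrM.
  by move=> /andP[? ?]; apply/andP; split; lra.
have [g g_near] := fin_all_exists near.
exists (i, [ffun k' => g k']) => k; rewrite mxE /=.
case: unliftP => [k' ->|->]; last by rewrite yi subrr normr0; lra.
by have := g_near k'; rewrite ffunE addrAC opprD addrA.
Qed.

Lemma polar_face_points_bound (z : 'rV[R]_n.+1) : 2 * n.+1%:R <= m%:R ^+ 2 :> R ->
  (forall j, dotv z (face_point j) ^+ 2 <= dotv (face_point j) (face_point j)) ->
  dotv z z <= 1 + n.+1%:R / m%:R ^+ 2.
Proof.
move=> m_large polar.
have m2_gt0 : 0 < m%:R ^+ 2 :> R by rewrite exprn_gt0 ?ltr0n.
have bound_ge0 : 0 <= n.+1%:R / m%:R ^+ 2 :> R by rewrite divr_ge0 ?ler0n ?ltW.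
have [i _ i_max] := @arg_maxP _ _ _ ord0 xpredT (fun k => `|z 0 k|) erefl.
have [zi0|zi_neq0] := eqVneq (z 0 i) 0.
  have -> : dotv z z = 0.
    apply: big1 => k _; have := i_max k isT; rewrite /= zi0 normr0 normr_le0 => /eqP->.
    by rewrite mul0r.
  by lra.
pose lam := m%:R / z 0 i.
have [j j_near] : exists j, forall k, `|face_point j 0 k - (lam *: z) 0 k| <= 1 / 2.
  apply: (@face_point_near _ i); first by rewrite mxE /lam divfK.
  move=> k; rewrite mxE normrM /lam normf_div normr_nat -mulrA.
  apply: ler_piMr; first exact: ler0n.
  by rewrite mulrC ler_pdivrMr ?normr_gt0 // mul1r; apply: i_max.
set e := face_point j - lam *: z.
have fp_eq : face_point j = lam *: z + e by rewrite /e addrC subrK.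
have e_small : dotv e e <= n.+1%:R / 4.
  have /dotv_le_coord_bound : forall k, `|e 0 k| <= 1 / 2.
    by move=> k; have := j_near k; rewrite /e !mxE.
  by rewrite expr2; lra.
have L_ge : m%:R ^+ 2 <= lam ^+ 2 * dotv z z.
  have -> : m%:R = lam * z 0 i by rewrite /lam divfK.
  by rewrite exprMn ler_wpM2l ?sqr_ge0 ?coord_sqr_le_dotv.
have := polar j; rewrite fp_eq => /dotv_perturb_bound perturb.
have : (dotv z z - 1) * (lam ^+ 2 * dotv z z) <= n.+1%:R.
  by apply: le_trans (perturb _) _; lra.
case: (lerP (dotv z z) 1) => [r_le1 _|r_gt1 r_le]; first by lra.
rewrite -lerBlDl ler_pdivlMr //; apply: le_trans r_le.
by rewrite ler_wpM2l // subr_ge0 ltW.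
Qed.

Variable delta : R.

Definition net_query (t : nat) : sphere R n.+1 :=
  to_sphere (dotv_face_point_gt0 (nth (ord0, [ffun => ord0]) (enum {: face_idx}) t)).

Definition net_consistent (s : seq R) (x : 'rV[R]_n.+1) :=
  forall t, (t < size s)%N -> `|nth 0 s t - dotv x (proj1_sig (net_query t))| <= delta.

Definition net_values (s : seq R) (v : sphere R n.+1) : set R :=
  [set dotv x (proj1_sig v) | x in net_consistent s]%classic.

Definition net_estimate (s : seq R) (v : sphere R n.+1) : R :=
  (sup (net_values s v) + inf (net_values s v)) / 2.

Definition net_reconstructor := Reconstructor (fun s => net_query (size s)) net_estimate.

Lemma card_face_idx : #|{: face_idx}| = (n.+1 * (2 * m).+1 ^ n)%N.
Proof. by rewrite card_prod card_ffun !card_ord. Qed.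

Lemma rq_net_reconstructor s : rq net_reconstructor s = net_query (size s).
Proof. by []. Qed.

Lemma rout_net_reconstructor s v : rout net_reconstructor s v = net_estimate s v.
Proof. by []. Qed.

Lemma net_consistent_diff s x1 x2 v :
  (#|{: face_idx}| <= size s)%N -> 0 < delta -> 2 * n.+1%:R <= m%:R ^+ 2 :> R ->
  dotv v v = 1 -> net_consistent s x1 -> net_consistent s x2 ->
  dotv x1 v - dotv x2 v <= 2 * delta * (1 + n.+1%:R / (2 * m%:R ^+ 2)).
Proof.
move=> s_large delta_gt0 m_large v1 cons1 cons2.
have delta2_gt0 : 0 < 2 * delta by rewrite mulr_gt0.
set y := (2 * delta)^-1 *: (x1 - x2).
have polar j : dotv y (face_point j) ^+ 2 <= dotv (face_point j) (face_point j).
  have fp_gt0 := dotv_face_point_gt0 j.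
  rewrite -[X in _ <= X]mul1r -ler_pdivrMr // -dotv_normalize_sqr //.
  rewrite -real_normK ?num_real // expr_le1 //.
  set t := index j (enum {: face_idx}).
  have t_lt : (t < size s)%N by apply: leq_trans s_large; rewrite cardE index_mem mem_enum.
  have := cons1 t t_lt; have := cons2 t t_lt.
  rewrite /net_query /= nth_index ?mem_enum // /y dotvZl dotvBl normrM gtr0_norm ?invr_gt0 //.
  rewrite ler_pdivrMl // mulr1 => c2; rewrite distrC => c1.
  set w := normalize _ in c1 c2 *.
  by have := ler_distD (nth 0 s t) (dotv x1 w) (dotv x2 w); lra.
have y_sqr := polar_face_points_bound m_large polar.
have y_v := dotv_unit_le_mean y v1.
have -> : dotv x1 v - dotv x2 v = 2 * delta * dotv y v.
  by rewrite /y dotvZl dotvBl mulrA mulfV ?gt_eqF // mul1r.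
by rewrite ler_pM2l // invfM; lra.
Qed.

Lemma worst_error_net_le T : (#|{: face_idx}| <= T)%N -> 0 < delta ->
  2 * n.+1%:R <= m%:R ^+ 2 :> R ->
  (worst_error net_reconstructor T delta <= (delta * (1 + n.+1%:R / (2 * m%:R ^+ 2)))%:E)%E.
Proof.
move=> T_large delta_gt0 m_large.
apply: ge_ereal_sup => _ [x [rs [v [[rs_size cons] ->]]]]; rewrite lee_fin.
have cons_x : net_consistent rs x.
  move=> t t_lt; rewrite -rs_size in cons.
  by have := cons t t_lt; rewrite rq_net_reconstructor size_takel // ltnW.
rewrite rout_net_reconstructor.
set K := 1 + _.
have -> : delta * K = 2 * delta * K / 2 by field.
apply: midpoint_sup_inf_near; first by exists x.
move=> _ _ [x1 cons1 <-] [x2 cons2 <-].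
have v1 : dotv (sval v) (sval v) = 1 := svalP v.
by apply: (net_consistent_diff (s := rs)); rewrite ?rs_size.
Qed.

End CubeNet.

Section Bounds.
Variables (R : realType) (n : nat).
Hypothesis n_gt0 : (0 < n)%N.

Lemma OPT_improper_ge (T : nat) (delta : R) : (0 < T)%N -> 0 < delta ->
  ((delta * (1 + 1 / (128 * n.+1%:R) * powR T%:R (- (2 / n%:R))))%:E
     <= OPT_improper n.+1 T delta)%E.
Proof.
move=> T_gt0 delta_gt0.
have T_ge1 : ((1 * 1) ^ n <= T)%N by rewrite exp1n.
have [m [m_gt0 /andP[]]] := exists_expn_bracket (c := 1) n_gt0 isT T_ge1.
rewrite !mul1n => mn_le T_lt.
apply: le_ereal_inf_tmp => _ [S _ <-].
apply: le_trans _ (worst_error_ge_pack (m := m.+1) isT S delta_gt0 T_lt).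
rewrite lee_fin ler_pM2l // lerD2l.
have P_gt0 : 0 < powR T%:R (2 / n%:R) :> R by rewrite powR_gt0 ?ltr0n.
have m_sqr : m%:R ^+ 2 <= powR T%:R (2 / n%:R) :> R.
  by apply: sqr_le_powR_2div; rewrite ?ler0n // -natrX ler_nat.
have m1_sqr : m.+1%:R ^+ 2 <= 4 * m%:R ^+ 2 :> R.
  have : m.+1%:R <= 2 * m%:R :> R by rewrite -natrM ler_nat; lia.
  have : 1 <= m%:R :> R by rewrite ler1n.
  nra.
set P := powR T%:R _ in P_gt0 m_sqr *.
rewrite powRN /pack_margin.
have -> : 1 / (128 * n.+1%:R) * P^-1 = 1 / (32 * n.+1%:R * (4 * P)).
  by field; rewrite gt_eqF //= nat1r pnatr_eq0.
rewrite !div1r lef_pV2 ?posrE ?mulr_gt0 ?exprn_gt0 ?ltr0n // ler_pM2l ?mulr_gt0 ?ltr0n //.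
lra.
Qed.

Lemma OPT_improper_le (T : nat) (delta : R) : ((12 * n.+1) ^ n <= T)%N -> 0 < delta ->
  (OPT_improper n.+1 T delta
     <= (delta * (1 + 72 * n.+1%:R * powR T%:R (- (2 / n%:R))))%:E)%E.
Proof.
move=> T_large delta_gt0.
have T_bracket : ((6 * (2 * n.+1)) ^ n <= T)%N by rewrite mulnA.
have [m [m_ge /andP[m6_le T_lt]]] := exists_expn_bracket (c := 6) n_gt0 isT T_bracket.
have m_gt0 : (0 < m)%N by apply: leq_trans m_ge.
have m_large : 2 * n.+1%:R <= m%:R ^+ 2 :> R.
  by rewrite -natrX -natrM ler_nat; nia.
have card_le : (#|{: 'I_n.+1 * {ffun 'I_n -> 'I_(2 * m).+1}}| <= T)%N.
  rewrite card_face_idx; apply: leq_trans m6_le.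
  apply: (@leq_trans ((2 * (2 * m).+1) ^ n)); last by rewrite leq_exp2r //; lia.
  by rewrite expnMn leq_mul2r ltn_expl ?orbT.
apply: le_trans (ereal_inf_lbound _) _; first by exists (net_reconstructor n m_gt0 delta).
apply: le_trans (worst_error_net_le m_gt0 card_le delta_gt0 m_large) _.
rewrite lee_fin ler_pM2l // lerD2l.
have T_le : T%:R <= (12 * m)%:R ^+ n :> R.
  rewrite -natrX ler_nat ltnW // (leq_trans T_lt) // leq_exp2r //; lia.
have P_le := powR_2div_le_sqr n_gt0 (ler0n _ _) (ler0n _ _) T_le.
have P_gt0 : 0 < powR T%:R (2 / n%:R) :> R by rewrite powR_gt0 ?ltr0n //; lia.
rewrite powRN; set P := powR T%:R _ in P_le P_gt0 *.
rewrite natrM exprMn in P_le.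
have -> : 72 * n.+1%:R / P = n.+1%:R / (P / 72) by field; rewrite gt_eqF.
rewrite ler_pM2l ?ltr0n // lef_pV2 ?posrE ?divr_gt0 ?mulr_gt0 ?exprn_gt0 ?ltr0n //.
lra.
Qed.

End Bounds.

Theorem mainTheorem19 (R : realType) (d : nat) :
  (2 <= d)%N ->
  exists (a A : R), 0 < a /\ 0 < A /\
  exists T' : nat, (1 <= T')%N /\
  forall (delta : R) (T : nat), 0 < delta -> (T' <= T)%N ->
    ((delta * (1 + a * powR (T%:R) (- (2 / (d - 1)%:R))))%:E
       <= OPT_improper d T delta)%E /\
    (OPT_improper d T delta
       <= (delta * (1 + A * powR (T%:R) (- (2 / (d - 1)%:R))))%:E)%E.
Proof.
case: d => [|n] // n_gt0; rewrite subn1 /=.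
exists (1 / (128 * n.+1%:R)), (72 * n.+1%:R).
split; first by rewrite divr_gt0 ?mulr_gt0 ?ltr0n.
split; first by rewrite mulr_gt0 ?ltr0n.
exists ((12 * n.+1) ^ n)%N; split; first by rewrite expn_gt0.
move=> delta T delta_gt0 T_large; split.
- by apply: OPT_improper_ge; rewrite // (leq_trans _ T_large) // expn_gt0.
- exact: OPT_improper_le.
Qed.
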